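(* Let $n>2$, $1\le k<n$, $X\in\mathfrak{X}_0$, $(R,r)$ a hypothesis, and let $(\kappa,M,p)$ satisfy Assumption (A). For $y$ such that $\hat A^{(p)}(y)$ is defined and $I_k-\sum_{l=1}^p\hat A_l(y)$ is invertible put $B_p(y)=R(X'X)^{-1}(I_k-\sum_{l=1}^p\hat A_l(y))^{-1}\hat Z(y)$. Then: 1. $\hat\Omega_{\kappa,M,p,X}(y)$ is nonnegative definite if and only if $y\notin N(\hat\Omega_{\kappa,M,p,X})$. 2. $\hat\Omega_{\kappa,M,p,X}(y)$ is singular if and only if $y\notin N(\hat\Omega_{\kappa,M,p,X})$ and $\operatorname{rank}(B_p(y))<q$. 3. $\hat\Omega_{\kappa,M,p,X}(y)=0$ if and only if $y\notin N(\hat\Omega_{\kappa,M,p,X})$ and $B_p(y)=0$. 4. $\hat\Omega_{\kappa,M,p,X}(y)$ is positive definite if $y\notin N(\hat\Omega_{\kappa,M,p,X})$ and $\operatorname{rank}(\hat Z(y))=k$. 5. There is a multivariate polynomial $g^*_{\kappa,M,p}:\mathbb{R}^n\times\mathbb{R}^{n\times k}\times\mathbb{R}^{q\times k}\to\mathbb{R}$, not depending on $r$, such that for all $X\in\mathfrak{X}_0$ and $R$ of rank $q$, $N^*(\hat\Omega_{\kappa,M,p,X})=\{y\in\mathbb{R}^n:g^*_{\kappa,M,p}(y,X,R)=0\}$; in particular $N^*(\hat\Omega_{\kappa,M,p,X})$ is an algebraic set.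
   Context: Let $n>2$ and $1\le k<n$ be integers and $\mathfrak{X}_0=\{X\in\mathbb{R}^{n\times k}:\operatorname{rank}(X)=k\}$. For $X\in\mathfrak{X}_0$, $y\in\mathbb{R}^n$: $\hat\beta_X(y)=(X'X)^{-1}X'y$, $\hat u_X(y)=y-X\hat\beta_X(y)$. A hypothesis is $(R,r)$ with $R\in\mathbb{R}^{q\times k}$, $\operatorname{rank}(R)=q\ge1$, $r\in\mathbb{R}^q$. Construction of $\hat\Omega_{\kappa,M,p,X}$ at $y$: $\hat V(y)=X'\operatorname{diag}(\hat u_X(y))\in\mathbb{R}^{k\times n}$ with columns $\hat V_{\cdot j}(y)$; $\hat V_p(y)=(\hat V_{\cdot(p+1)}(y),\dots,\hat V_{\cdot n}(y))$; $\hat V_1(y)\in\mathbb{R}^{kp\times(n-p)}$ has $j$-th column $(\hat V_{\cdot(j+p-1)}(y)',\dots,\hat V_{\cdot j}(y)')'$. If $\hat V_1\hat V_1'$ is invertible, $\hat A^{(p)}(y)=(\hat A_1(y),\dots,\hat A_p(y))=\hat V_p\hat V_1'(\hat V_1\hat V_1')^{-1}$ and $\hat Z(y)=\hat V_p(y)-\hat A^{(p)}(y)\hat V_1(y)\in\mathbb{R}^{k\times(n-p)}$. $\check\Gamma_i(y)=(n-p)^{-1}\sum_{j=i+1}^{n-p}\hat Z_{\cdot j}\hat Z_{\cdot(j-i)}'$ for $0\le i\le n-p-1$, $\check\Gamma_{-i}=\check\Gamma_i'$, $\check\Psi(y)=\sum_{|i|\le n-p-1}\kappa(i/M(y))\check\Gamma_i(y)$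 (if $M(y)=0$, the weight is $1$ for $i=0$ and $0$ otherwise). If $I_k-\sum_l\hat A_l(y)$ is invertible, with $F$ its inverse, $\hat\Psi(y)=F\check\Psi(y)F'$ and $\hat\Omega_{\kappa,M,p,X}(y)=nR(X'X)^{-1}\hat\Psi(y)(X'X)^{-1}R'$. It is undefined at $y$ if $\hat V_1\hat V_1'$ is singular, $I_k-\sum_l\hat A_l(y)$ is singular, or $M(y)$ is undefined. $N(\hat\Omega)$: set of $y$ where $\hat\Omega$ is undefined; $N^*(\hat\Omega)$: set of $y$ where $\hat\Omega(y)$ is undefined or singular. Bandwidths (undefined whenever $\hat Z(y)$ is undefined or a denominator vanishes; tuning constants independent of $y$ and $X$; a weights vector is $\omega\in\mathbb{R}^k\setminus\{0\}$ with nonnegative entries). $\mathbb{M}_{AM}$: $\hat\rho_i=\sum_{j=2}^{n-p}\hat Z_{ij}\hat Z_{i(j-1)}/\sum_{j=1}^{n-p-1}\hat Z_{ij}^2$, $\hat\sigma_i^2=(n-p-1)^{-1}\sum_{j=2}^{n-p}(\hat Z_{ij}-\hat\rho_i\hat Z_{i(j-1)})^2$, $\hat\alpha_1=\sum_i\omega_i\frac{4\hat\rho_i^2\hat\sigma_i^4}{(1-\hat\rho_i)^6(1+\hat\rho_i)^2}/\sum_i\omega_i\frac{\hat\sigma_i^4}{(1-\hat\rho_i)^4}$, $\hat\alpha_2=\sum_i\omega_i\frac{4\hat\rho_i^2\hat\sigma_i^4}{(1-\hat\rho_i)^8}/\sum_i\omega_i\frac{\hat\sigma_i^4}{(1-\hat\rho_i)^4}$,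 $M(y)=c_1(\hat\alpha_j(y)n)^{c_2}$, $c_1,c_2>0$, $j\in\{1,2\}$. $\mathbb{M}_{NW}$: $w(i)\ge0$ for $|i|\le n-p-1$, $w(0)=1$, $\bar\sigma_i=\omega'\check\Gamma_{|i|}\omega$, $M(y)=\bar c_2([\sum_i|i|^{\bar c_1}w(i)\bar\sigma_i/\sum_iw(i)\bar\sigma_i]^2n)^{\bar c_3}$, $\bar c_1\in\mathbb{N}$, $\bar c_2,\bar c_3>0$. $\mathbb{M}_{KV}$: constants $M>0$. Assumption (A): (i) $\kappa$ even, continuous, $\kappa(0)=1$, $\kappa(x)\to0$ as $x\to\infty$, and for all $s>0$, $J\in\mathbb{N}$ the matrix $(\kappa((i-j)/s))_{i,j=1}^J$ is positive definite; (ii) $M\in\mathbb{M}_{AM}\cup\mathbb{M}_{NW}\cup\mathbb{M}_{KV}$; (iii) $p\in\mathbb{Z}$, $1\le p\le n/(k+1)$. *)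

From HB Require Import structures.
From mathcomp Require Import all_boot all_order all_algebra.
From mathcomp Require Import all_classical all_reals all_analysis.
From mathcomp Require mpoly.

Set Implicit Arguments.
Unset Strict Implicit.
Unset Printing Implicit Defensive.
Import Order.TTheory GRing.Theory Num.Theory.
Import numFieldNormedType.Exports.
Local Open Scope classical_set_scope.
Local Open Scope ring_scope.

Section Estimator.
Variable R : realType.

(* entry (i,j) of a matrix indexed by naturals (0-based); 0 outside range *)
Definition getm m n (A : 'M[R]_(m, n)) (i j : nat) : R :=
  match (insub i : option 'I_m), (insub j : option 'I_n) with
  | Some a, Some b => A a b
  | _, _ => 0
  end.

Definition nnd m (A : 'M[R]_m) : Prop :=
  forall v : 'cV[R]_m, 0 <= (v^T *m A *m v) 0 0.
Definition posdef m (A : 'M[R]_m) : Prop :=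
  forall v : 'cV[R]_m, v != 0 -> 0 < (v^T *m A *m v) 0 0.

Definition uhat n k (X : 'M[R]_(n, k)) (y : 'cV[R]_n) : 'cV[R]_n :=
  y - X *m (invmx (X^T *m X) *m X^T *m y).

Definition Vhat n k (X : 'M[R]_(n, k)) (y : 'cV[R]_n) : 'M[R]_(k, n) :=
  X^T *m diag_mx (uhat X y)^T.

(* V_p(y) = (V_{.(p+1)}, ..., V_{.n})  (0-based: columns p .. n-1) *)
Definition Vp n k p (X : 'M[R]_(n, k)) (y : 'cV[R]_n) : 'M[R]_(k, n - p) :=
  \matrix_(a < k, j < n - p) getm (Vhat X y) a (j + p).

(* V_1(y) : kp x (n-p); (0-based) column j is the stack of the columns
   j+p-1, j+p-2, ..., j of V(y); block l (l < p) holds column j+p-1-l. *)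
Definition V1 n k p (X : 'M[R]_(n, k)) (y : 'cV[R]_n) : 'M[R]_(p * k, n - p) :=
  \matrix_(i < p * k, j < n - p)
     getm (Vhat X y) (i %% k) (j + (p - (i %/ k).+1)).

Definition Ahat n k p (X : 'M[R]_(n, k)) (y : 'cV[R]_n)
  : option 'M[R]_(k, p * k) :=
  let S := V1 p X y *m (V1 p X y)^T in
  if S \in unitmx then Some (Vp p X y *m (V1 p X y)^T *m invmx S) else None.

Definition sumA k p (A : 'M[R]_(k, p * k)) : 'M[R]_k :=
  \sum_(l < p) \matrix_(a < k, b < k) getm A a (l * k + b).

Definition Zhat n k p (X : 'M[R]_(n, k)) (y : 'cV[R]_n)
  : option 'M[R]_(k, n - p) :=
  omap (fun A => Vp p X y - A *m V1 p X y) (Ahat p X y).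

(* Gamma-check_i for a k x m matrix Z (m = n - p), 0 <= i <= m-1:
   m^{-1} sum_{j=i+1}^{m} Z_{.j} Z_{.(j-i)}'  (1-based), written 0-based *)
Definition Gammac k m (Z : 'M[R]_(k, m)) (i : nat) : 'M[R]_k :=
  \matrix_(a < k, b < k)
     ((m%:R)^-1 * \sum_(i <= j < m) getm Z a j * getm Z b (j - i)).

Definition kw (kappa : R -> R) (M : R) (i : int) : R :=
  if M == 0 then (i == 0)%:R else kappa (i%:~R / M).

Definition symsum (m : nat) (f : int -> R) : R :=
  \sum_(i < m) (f (Posz i) + (if (0 < i)%N then f (- Posz i) else 0)).

(* Psi-check = sum_{|i| <= m-1} kappa(i/M) Gamma-check_i,
   Gamma-check_{-i} = Gamma-check_i' *)
Definition Psic (kappa : R -> R) (M : R) k m (Z : 'M[R]_(k, m)) : 'M[R]_k :=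
  \sum_(i < m) (kw kappa M (Posz i) *: Gammac Z i
     + (if (0 < i)%N then kw kappa M (- Posz i) *: (Gammac Z i)^T else 0)).

Inductive bwspec (k : nat) : Type :=
  (* AM: weights om, constants c1 c2, index j in {1,2} *)
  | BW_AM of 'cV[R]_k & R & R & nat
  (* NW: weights om, w, cbar1 cbar2 cbar3 *)
  | BW_NW of 'cV[R]_k & (int -> R) & nat & R & R
  | BW_KV of R.

Definition weightsv k (om : 'cV[R]_k) : Prop :=
  om != 0 /\ forall a, 0 <= om a 0.

Definition bw_ok k (m : nat) (bw : bwspec k) : Prop :=
  match bw with
  | BW_AM om c1 c2 j => weightsv om /\ 0 < c1 /\ 0 < c2 /\ (j = 1%N \/ j = 2%N)
  | BW_NW om w cb1 cb2 cb3 =>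
      weightsv om /\ (forall i : int, (absz i <= m.-1)%N -> 0 <= w i) /\
      w 0 = 1 /\ (0 < cb1)%N /\ 0 < cb2 /\ 0 < cb3
  | BW_KV M => 0 < M
  end.

Definition rhoh k m (Z : 'M[R]_(k, m)) (a : 'I_k) : R :=
  (\sum_(1 <= t < m) getm Z a t * getm Z a t.-1) /
  (\sum_(0 <= t < m.-1) getm Z a t ^+ 2).
Definition sig2h k m (Z : 'M[R]_(k, m)) (a : 'I_k) : R :=
  ((m.-1)%:R)^-1 * \sum_(1 <= t < m) (getm Z a t - rhoh Z a * getm Z a t.-1) ^+ 2.

Definition Mbw k (n : nat) m (bw : bwspec k) (Z : 'M[R]_(k, m)) : option R :=
  match bw with
  | BW_AM om c1 c2 j =>
      let rho := rhoh Z in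
      let s2 := sig2h Z in
      let D := \sum_a om a 0 * (s2 a ^+ 2 / (1 - rho a) ^+ 4) in
      let N1 := \sum_a om a 0 * (4 * rho a ^+ 2 * s2 a ^+ 2 /
                                ((1 - rho a) ^+ 6 * (1 + rho a) ^+ 2)) in
      let N2 := \sum_a om a 0 * (4 * rho a ^+ 2 * s2 a ^+ 2 / (1 - rho a) ^+ 8) in
      if [&& (m.-1 != 0)%N,
             [forall a : 'I_k, \sum_(0 <= t < m.-1) getm Z a t ^+ 2 != 0],
             [forall a : 'I_k, 1 - rho a != 0],
             (j == 1%N) ==> [forall a : 'I_k, 1 + rho a != 0] & D != 0]
      then Some (c1 * powR ((if j == 1%N then N1 / D else N2 / D) * n%:R) c2)
      else None
  | BW_NW om w cb1 cb2 cb3 =>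
      let sb := fun i : int => (om^T *m Gammac Z (absz i) *m om) 0 0 in
      let num := symsum m (fun i => (absz i)%:R ^+ cb1 * w i * sb i) in
      let den := symsum m (fun i => w i * sb i) in
      if den != 0 then Some (cb2 * powR ((num / den) ^+ 2 * n%:R) cb3) else None
  | BW_KV M => Some M
  end.

Definition Omegah (kappa : R -> R) k (bw : bwspec k) n q p
  (X : 'M[R]_(n, k)) (Rm : 'M[R]_(q, k)) (y : 'cV[R]_n) : option 'M[R]_q :=
  match Ahat p X y with
  | None => None
  | Some A =>
      let Z := Vp p X y - A *m V1 p X y in
      let D := (1%:M : 'M[R]_k) - sumA A in
      if D \in unitmx then
        match Mbw n bw Z with
        | None => None
        | Some M =>
            let F := invmx D in
            let XXi := invmx (X^T *m X) in
            Some (n%:R *: (Rm *m XXi *m (F *m Psic kappa M Z *m F^T)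
                              *m XXi *m Rm^T))
        end
      else None
  end.

Definition Bp n k q p (X : 'M[R]_(n, k)) (Rm : 'M[R]_(q, k)) (y : 'cV[R]_n)
  : option 'M[R]_(q, n - p) :=
  match Ahat p X y with
  | None => None
  | Some A =>
      let Z := Vp p X y - A *m V1 p X y in
      let D := (1%:M : 'M[R]_k) - sumA A in
      if D \in unitmx then Some (Rm *m invmx (X^T *m X) *m invmx D *m Z)
      else None
  end.

Definition inNstar (kappa : R -> R) k (bw : bwspec k) n q p
  (X : 'M[R]_(n, k)) (Rm : 'M[R]_(q, k)) (y : 'cV[R]_n) : Prop :=
  Omegah kappa bw p X Rm y = None \/
  exists O, Omegah kappa bw p X Rm y = Some O /\ O \notin unitmx.

Definition kernelA (kappa : R -> R) : Prop :=
  (forall x, kappa (- x) = kappa x) /\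
  continuous kappa /\
  kappa 0 = 1 /\
  (kappa x @[x --> +oo] --> 0) /\
  (forall s : R, 0 < s -> forall J : nat,
     posdef (\matrix_(i < J, j < J) kappa ((i%:R - j%:R) / s))).

Definition packv n k q (y : 'cV[R]_n) (X : 'M[R]_(n, k)) (Rm : 'M[R]_(q, k))
  : 'I_(n + n * k + q * k) -> R :=
  fun i =>
    let t := nat_of_ord i in
    if (t < n)%N then getm y t 0
    else if (t < n + n * k)%N then getm X ((t - n) %/ k) ((t - n) %% k)
    else getm Rm ((t - n - n * k) %/ k) ((t - n - n * k) %% k).

End Estimator.

From HB Require Import structures.
From mathcomp Require Import all_boot all_order all_algebra.
From mathcomp Require Import all_classical all_reals all_analysis.
From mathcomp Require mpoly.
From mathcomp Require Import ring.

Set Implicit Arguments.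
Unset Strict Implicit.
Unset Printing Implicit Defensive.
Import Order.TTheory GRing.Theory Num.Theory.
Local Open Scope ring_scope.

(* Wherever Omega-hat is defined it equals (n/(n-p)) B W B', with B = B_p(y) and
   W = (kappa((i-j)/M))_{i,j < n-p} (the identity if M = 0): grouping the sample
   autocovariances by lag turns Psi-check into (n-p)^-1 Z W Z'.  By Assumption
   (A)(i) W is positive definite, so parts 1-4 are properties of the congruence
   B W B'.  For part 5, on the set where X'X is invertible every ingredient of
   Omega-hat is a rational function of (y, X, R) whose denominators do not vanish
   where it is used.  N* is the union of the sets where V_1 V_1' is singular,
   where I - sum_l A_l is singular, where M is undefined and where det(B B') = 0;
   each is a polynomial zero set relative to the complement of the preceding
   ones, and the product of these polynomials cuts out N*. *)

Section RealMatrix.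
Variable R : realFieldType.

Lemma mulmx_trmx_self_ge0 m (x : 'rV[R]_m) : 0 <= (x *m x^T) 0 0.
Proof. by rewrite mxE; apply: sumr_ge0 => i _; rewrite mxE -expr2 sqr_ge0. Qed.

Lemma mulmx_trmx_self_eq0 m (x : 'rV[R]_m) : ((x *m x^T) 0 0 == 0) = (x == 0).
Proof.
apply/idP/eqP => [|->]; last by rewrite mul0mx mxE.
rewrite mxE psumr_eq0 => [/allP x0|i _]; last by rewrite mxE -expr2 sqr_ge0.
apply/rowP => j; have /implyP := x0 j (mem_index_enum j).
by rewrite mxE -expr2 sqrf_eq0 mxE => /(_ isT)/eqP.
Qed.

Lemma unitmx_mulmx_trmx q m (B : 'M[R]_(q, m)) : (B *m B^T \in unitmx) = row_free B.
Proof.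
rewrite -row_free_unit; apply/idP/idP => [BBt_free|B_free].
  by rewrite /row_free eqn_leq rank_leq_row -{1}(eqP BBt_free) mxrankM_maxl.
apply: inj_row_free => u; rewrite mulmxA => uBBt0.
apply/eqP; rewrite -(mulmx_free_eq0 _ B_free) -mulmx_trmx_self_eq0.
by rewrite trmx_mul mulmxA uBBt0 mul0mx mxE.
Qed.

Lemma unitmx_trmx_mul_self n k (X : 'M[R]_(n, k)) : \rank X = k -> X^T *m X \in unitmx.
Proof. by move=> rX; rewrite -{2}[X]trmxK unitmx_mulmx_trmx /row_free mxrank_tr rX. Qed.

End RealMatrix.

Lemma posdef1 (R : realType) m : posdef (1%:M : 'M[R]_m).
Proof.
move=> v v0; rewrite mulmx1 lt_def.
have := mulmx_trmx_self_ge0 v^T; have := mulmx_trmx_self_eq0 v^T; rewrite !trmxK => -> ->.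
by rewrite -trmx0 (inj_eq trmx_inj) v0.
Qed.

Section Congruence.
Variables (R : realType) (q m : nat) (c : R) (K : 'M[R]_m) (B : 'M[R]_(q, m)).
Hypotheses (c_gt0 : 0 < c) (K_posdef : posdef K).

Local Notation O := (c *: (B *m K *m B^T)).

Lemma quad_congr (v : 'cV_q) :
  (v^T *m O *m v) 0 0 = c * ((B^T *m v)^T *m K *m (B^T *m v)) 0 0.
Proof. by rewrite -scalemxAr -scalemxAl mxE trmx_mul trmxK !mulmxA. Qed.

Lemma nnd_congr : nnd O.
Proof.
move=> v; rewrite quad_congr pmulr_rge0 //.
have [->|Bv0] := eqVneq (B^T *m v) 0; first by rewrite mulmx0 mxE.
exact/ltW/K_posdef.
Qed.

Lemma quad_congr_eq0 (v : 'cV_q) : (v^T *m O *m v) 0 0 = 0 -> B^T *m v = 0.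
Proof.
rewrite quad_congr => /eqP; rewrite mulf_eq0 gt_eqF //= => /eqP vOv0.
by apply/eqP/negPn/negP => /K_posdef; rewrite vOv0 ltxx.
Qed.

Lemma mulmx_congr_eq0 (u : 'rV_q) : (u *m O == 0) = (u *m B == 0).
Proof.
apply/eqP/eqP => [uO0|uB0]; last by rewrite -scalemxAr !mulmxA uB0 !mul0mx scaler0.
have /(congr1 trmx) : B^T *m u^T = 0 by apply: quad_congr_eq0; rewrite trmxK uO0 mul0mx mxE.
by rewrite trmx_mul !trmxK trmx0.
Qed.

Lemma unitmx_congr : (O \in unitmx) = row_free B.
Proof.
rewrite -row_free_unit; apply/idP/idP => B_free.
  by apply: inj_row_free => u /eqP; rewrite -mulmx_congr_eq0 mulmx_free_eq0 // => /eqP.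
by apply: inj_row_free => u /eqP; rewrite mulmx_congr_eq0 mulmx_free_eq0 // => /eqP.
Qed.

Lemma congr_eq0 : (O == 0) = (B == 0).
Proof.
apply/eqP/eqP => [congr0|->]; last by rewrite !mul0mx scaler0.
apply/row_matrixP => i; rewrite row0 rowE; apply/eqP.
by rewrite -mulmx_congr_eq0 congr0 mulmx0.
Qed.

Lemma posdef_congr : row_free B -> posdef O.
Proof.
move=> B_free v v0; rewrite quad_congr pmulr_rgt0 //; apply: K_posdef.
rewrite -trmx0 -[B^T *m v]trmxK (inj_eq trmx_inj) trmx_mul trmxK.
by rewrite mulmx_free_eq0 // -trmx0 (inj_eq trmx_inj).
Qed.

End Congruence.

Section LagSums.
Variable R : nmodType.

Lemma big_triangle_recr a m (F : nat -> nat -> R) :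
  \sum_(a <= i < m.+1) \sum_(i <= j < m.+1) F i j =
  \sum_(a <= i < m) \sum_(i <= j < m) F i j + \sum_(a <= i < m.+1) F i m.
Proof.
under eq_big_nat => i /andP[_ /ltnSE im] do rewrite big_nat_recr //=.
rewrite big_split /=; congr (_ + _).
have [am|ma] := leqP a m; first by rewrite big_nat_recr //= [X in _ + X]big_geq ?addr0.
by rewrite !big_geq // ltnW.
Qed.

Lemma sum_square_diagonals m (G : nat -> nat -> R) :
  \sum_(0 <= j < m) \sum_(0 <= l < m) G j l =
  \sum_(0 <= i < m) \sum_(i <= j < m) G j (j - i)%N
  + \sum_(1 <= i < m) \sum_(i <= j < m) G (j - i)%N j.
Proof.
elim: m => [|m IH]; first by rewrite !big_geq ?addr0.
rewrite !(big_triangle_recr _ _ (fun i j => G _ _)) addrACA -IH big_nat_recr //=.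
under eq_big_nat => j _ do rewrite big_nat_recr //=.
rewrite big_split /= -addrA [X in _ + X]addrC; congr (_ + (_ + _)).
  by rewrite [RHS]big_nat_rev; apply: eq_big_nat => i /andP[_ im]; rewrite add0n subSS subKn.
by rewrite [RHS]big_add1 /= [LHS]big_nat_rev; apply: eq_big_nat => i _; rewrite add0n.
Qed.

Lemma big_ord_pos m (F : nat -> R) :
  \sum_(i < m) (if (0 < i)%N then F i else 0) = \sum_(1 <= i < m) F i.
Proof.
rewrite -(big_mkord xpredT (fun i => if (0 < i)%N then F i else 0)).
by case: m => [|m]; [rewrite !big_geq | rewrite big_nat_recl // add0r big_add1].
Qed.

End LagSums.

Definition toeplitz (R : pzRingType) m (w : int -> R) : 'M[R]_m :=
  \matrix_(i, j) w (i%:Z - j%:Z).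

Section LongRunVariance.
Variable R : realType.

Lemma getm_ord m n (A : 'M[R]_(m, n)) (i : 'I_m) (j : 'I_n) : getm A i j = A i j.
Proof. by rewrite /getm !valK. Qed.

Lemma Psic_toeplitz kappa M k m (Z : 'M[R]_(k, m)) :
  Psic kappa M Z = m%:R^-1 *: (Z *m toeplitz m (kw kappa M) *m Z^T).
Proof.
apply/matrixP => a b.
pose G j l := getm Z a j * kw kappa M (j%:Z - l%:Z) * getm Z b l.
have -> : (m%:R^-1 *: (Z *m toeplitz m (kw kappa M) *m Z^T)) a b =
    m%:R^-1 * \sum_(0 <= j < m) \sum_(0 <= l < m) G j l.
  rewrite !mxE; congr (_ * _); under eq_bigr do rewrite mxE big_distrl /=.
  rewrite exchange_big /= big_mkord; apply: eq_bigr => j _.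
  by rewrite big_mkord; apply: eq_bigr => l _; rewrite !mxE /G !getm_ord.
rewrite /Psic big_split /= (big_ord_pos _ (fun i => kw kappa M (- Posz i) *: (Gammac Z i)^T)).
rewrite mxE !summxE sum_square_diagonals mulrDr !big_distrr /= big_mkord.
congr (_ + _); [apply: eq_bigr => i _ | apply: eq_big_nat => i _];
  rewrite !mxE mulrCA big_distrr; congr (_ * _); apply: eq_big_nat => j /andP[ij _].
  by rewrite /= /G subzn ?leq_subr // subKn // mulrCA mulrA.
by rewrite /= /G -opprB subzn ?leq_subr // subKn //; ring.
Qed.

Lemma toeplitz_kw_posdef (kappa : R -> R) (M : R) m :
  kernelA kappa -> 0 <= M -> posdef (toeplitz m (kw kappa M)).
Proof.
move=> [_ [_ [_ [_ kappa_posdef]]]]; rewrite le_eqVlt => /orP[/eqP<-|M_gt0].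
  suff -> : toeplitz m (kw kappa 0) = 1%:M by apply: posdef1.
  by apply/matrixP => i j; rewrite !mxE /kw eqxx subr_eq0 eqz_nat.
suff -> : toeplitz m (kw kappa M) = \matrix_(i, j) kappa ((i%:R - j%:R) / M).
  exact: kappa_posdef.
by apply/matrixP => i j; rewrite !mxE /kw gt_eqF // intrB.
Qed.

Lemma Mbw_ge0 k n m (bw : bwspec R k) (Z : 'M[R]_(k, m)) M :
  bw_ok m bw -> Mbw n bw Z = Some M -> 0 <= M.
Proof.
case: bw => [om c1 c2 j|om w cb1 cb2 cb3|M0] /=.
- by move=> [_ [/ltW c1_ge0 _]]; case: ifP => // _ [<-]; rewrite mulr_ge0 ?powR_ge0.
- by move=> [_ [_ [_ [_ [/ltW cb2_ge0 _]]]]]; case: ifP => // _ [<-]; rewrite mulr_ge0 ?powR_ge0.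
- by move=> /ltW M0_ge0 [<-].
Qed.

End LongRunVariance.

Definition Bmx (R : realType) n k q p (X : 'M[R]_(n, k)) (Rm : 'M[R]_(q, k))
    (y : 'cV[R]_n) (A : 'M[R]_(k, p * k)) : 'M[R]_(q, n - p) :=
  Rm *m invmx (X^T *m X) *m invmx (1%:M - sumA A) *m (Vp p X y - A *m V1 p X y).

Section OmegaCongruence.
Variables (R : realType) (kappa : R -> R) (k n q p : nat) (bw : bwspec R k).
Variables (X : 'M[R]_(n, k)) (Rm : 'M[R]_(q, k)).
Hypotheses (kappaA : kernelA kappa) (bw_admissible : bw_ok (n - p) bw) (np_gt0 : (0 < n - p)%N).

Local Notation Omega := (Omegah kappa bw p X Rm).

Lemma Omegah_congruence y O : Omega y = Some O ->
  exists2 A, [/\ Ahat p X y = Some A, 1%:M - sumA A \in unitmx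
                 & Bp p X Rm y = Some (Bmx X Rm y A)] &
  exists c K, [/\ 0 < c, posdef K & O = c *: (Bmx X Rm y A *m K *m (Bmx X Rm y A)^T)].
Proof.
rewrite /Omegah; case EA: Ahat => [A|] //; case: ifP => // DU; case EM: Mbw => [M|] // [<-].
exists A; first by rewrite /Bp EA DU.
exists (n%:R / (n - p)%:R), (toeplitz (n - p) (kw kappa M)); split.
- by rewrite divr_gt0 // ltr0n (leq_trans np_gt0) ?leq_subr.
- exact: toeplitz_kw_posdef kappaA (Mbw_ge0 bw_admissible EM).
have XtX_sym : (invmx (X^T *m X))^T = invmx (X^T *m X) by rewrite trmx_inv trmx_mul trmxK.
rewrite Psic_toeplitz /Bmx !trmx_mul XtX_sym.
by rewrite -!scalemxAr -!scalemxAl -?scalemxAr -?scalemxAl -?scalemxAr scalerA !mulmxA mulrC.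
Qed.

Lemma Omegah_nnd y : (exists O, Omega y = Some O /\ nnd O) <-> Omega y <> None.
Proof.
split => [ [Om [E _]] | ]; first by rewrite E.
case E: (Omega y) => [Om|] // _; exists Om; split => //.
by have [A _ [c [K [c_gt0 K_posdef ->]]]] := Omegah_congruence E; apply: nnd_congr.
Qed.

Lemma Omegah_singular y :
  (exists O, Omega y = Some O /\ O \notin unitmx) <->
  (Omega y <> None /\ exists B, Bp p X Rm y = Some B /\ (\rank B < q)%N).
Proof.
split => [ [Om [E O_sing]] |[defined [B [EB rB]]]].
  have [A [_ _ EB] [c [K [c_gt0 K_posdef EO]]]] := Omegah_congruence E.
  split; first by rewrite E.
  exists (Bmx X Rm y A); split => //.
  by move: O_sing; rewrite EO unitmx_congr // /row_free ltn_neqAle rank_leq_row andbT.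
case E: (Omega y) defined => [Om|] // _; exists Om; split => //.
have [A [_ _ EB'] [c [K [c_gt0 K_posdef ->]]]] := Omegah_congruence E.
by move: EB; rewrite EB' => -[->]; rewrite unitmx_congr // /row_free neq_ltn rB.
Qed.

Lemma Omegah_eq0 y :
  Omega y = Some 0 <-> (Omega y <> None /\ Bp p X Rm y = Some 0).
Proof.
split => [E|[defined EB]].
  split; first by rewrite E.
  have [A [_ _ ->] [c [K [c_gt0 K_posdef EO]]]] := Omegah_congruence E.
  by have /eqP := esym EO; rewrite congr_eq0 // => /eqP->.
case E: (Omega y) defined => [Om|] // _.
have [A [_ _ EB'] [c [K [c_gt0 K_posdef EO]]]] := Omegah_congruence E.
by move: EB; rewrite EB' => -[B0]; congr Some; apply/eqP; rewrite EO congr_eq0 // B0.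
Qed.

Lemma Omegah_posdef y : \rank X = k -> \rank Rm = q -> Omega y <> None ->
  (exists Z, Zhat p X y = Some Z /\ \rank Z = k) ->
  exists O, Omega y = Some O /\ posdef O.
Proof.
move=> rX rRm; case E: (Omega y) => [Om|] // _ [Z [EZ rZ]]; exists Om; split => //.
have [A [EA DU _] [c [K [c_gt0 K_posdef ->]]]] := Omegah_congruence E.
apply: posdef_congr => //; move: EZ; rewrite /Zhat EA => -[EZ].
rewrite /row_free /Bmx EZ mxrankMfree ?/row_free ?rZ //.
by rewrite !mxrankMfree ?rRm ?row_free_unit ?unitmx_inv ?unitmx_trmx_mul_self.
Qed.

End OmegaCongruence.

Canonical mpoly.mpoly_mpoly__canonical__Algebra_BaseAddUMagma.
Canonical mpoly.mpoly_mpoly__canonical__Algebra_BaseZmodule.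
Canonical mpoly.mpoly_mpoly__canonical__GRing_PzSemiRing.

Section RationalFunctions.
Variables (R : fieldType) (N : nat) (T : Type) (coord : T -> 'I_N -> R).
Local Notation mpoly := (mpoly.mpoly N R).
Local Notation ev t g := (mpoly.meval (coord t) g).

Definition rational_on (U : T -> Prop) (f : T -> R) :=
  exists a b : mpoly, forall t, U t -> ev t b != 0 /\ f t = ev t a / ev t b.

Definition zero_set_on (U : T -> Prop) (C : T -> Prop) :=
  exists g : mpoly, forall t, U t -> C t <-> ev t g = 0.

Implicit Types (U V : T -> Prop) (f g : T -> R) (C : T -> Prop).

Lemma eq_rational_on U f g : rational_on U g -> (forall t, U t -> f t = g t) -> rational_on U f.
Proof. by move=> [a [b g_ab]] fg; exists a, b => t Ut; rewrite fg //; apply: g_ab. Qed.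

Lemma rational_onS U V f : (forall t, V t -> U t) -> rational_on U f -> rational_on V f.
Proof. by move=> VU [a [b f_ab]]; exists a, b => t /VU; apply: f_ab. Qed.

Lemma rational_on_poly U (a : mpoly) : rational_on U (fun t => ev t a).
Proof. by exists a, 1 => t _; rewrite mpoly.meval1 oner_neq0 divr1. Qed.

Lemma rational_on_cst U c : rational_on U (fun _ => c).
Proof.
by apply: (eq_rational_on (rational_on_poly U (mpoly.mpolyC N c))) => t _; rewrite mpoly.mevalC.
Qed.

Lemma rational_onD U f g : rational_on U f -> rational_on U g -> rational_on U (fun t => f t + g t).
Proof.
move=> [a [b f_ab]] [c [d g_cd]]; exists (a * d + c * b), (b * d) => t Ut.
have [b0 ->] := f_ab t Ut; have [d0 ->] := g_cd t Ut.
by rewrite mpoly.mevalD !mpoly.mevalM mulf_neq0 // addf_div.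
Qed.

Lemma rational_onM U f g : rational_on U f -> rational_on U g -> rational_on U (fun t => f t * g t).
Proof.
move=> [a [b f_ab]] [c [d g_cd]]; exists (a * c), (b * d) => t Ut.
have [b0 ->] := f_ab t Ut; have [d0 ->] := g_cd t Ut.
by rewrite !mpoly.mevalM mulf_neq0 // mulrACA invfM.
Qed.

Lemma rational_onN U f : rational_on U f -> rational_on U (fun t => - f t).
Proof.
move=> [a [b f_ab]]; exists (- a), b => t Ut.
by have [b0 ->] := f_ab t Ut; rewrite mpoly.mevalN mulNr.
Qed.

Lemma rational_onB U f g : rational_on U f -> rational_on U g -> rational_on U (fun t => f t - g t).
Proof. by move=> f_rat g_rat; apply/rational_onD/rational_onN. Qed.

Lemma rational_onV U f : rational_on U f -> (forall t, U t -> f t != 0) ->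
  rational_on U (fun t => (f t)^-1).
Proof.
move=> [a [b f_ab]] f0; exists b, a => t Ut.
have [b0 fE] := f_ab t Ut; move: (f0 t Ut); rewrite fE mulf_eq0 negb_or => /andP[a0 _].
by rewrite invf_div.
Qed.

Lemma rational_on_sum U (I : Type) (r : seq I) (P : pred I) (F : I -> T -> R) :
  (forall i, rational_on U (F i)) -> rational_on U (fun t => \sum_(i <- r | P i) F i t).
Proof.
move=> F_rat; elim: r => [|x r IH].
  by apply: (eq_rational_on (rational_on_cst U 0)) => t _; rewrite big_nil.
apply: eq_rational_on (_ : rational_on U (fun t => (if P x then F x t else 0)
  + \sum_(i <- r | P i) F i t)) _ => [|t _]; last by rewrite big_cons; case: (P x); rewrite ?add0r.
by apply: rational_onD => //; case: (P x) => //; apply: rational_on_cst.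
Qed.

Lemma rational_on_prod U (I : Type) (r : seq I) (P : pred I) (F : I -> T -> R) :
  (forall i, rational_on U (F i)) -> rational_on U (fun t => \prod_(i <- r | P i) F i t).
Proof.
move=> F_rat; elim: r => [|x r IH].
  by apply: (eq_rational_on (rational_on_cst U 1)) => t _; rewrite big_nil.
apply: eq_rational_on (_ : rational_on U (fun t => (if P x then F x t else 1)
  * \prod_(i <- r | P i) F i t)) _ => [|t _]; last by rewrite big_cons; case: (P x); rewrite ?mul1r.
by apply: rational_onM => //; case: (P x) => //; apply: rational_on_cst.
Qed.

Lemma rational_onX U f e : rational_on U f -> rational_on U (fun t => f t ^+ e).
Proof.
move=> f_rat; apply: (eq_rational_on (rational_on_prod (index_iota 0 e) xpredT (fun=> f_rat))).
by move=> t _; rewrite prodr_const_nat subn0.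
Qed.

Lemma zero_set_on_rational U f : rational_on U f -> zero_set_on U (fun t => f t = 0).
Proof.
move=> [a [b f_ab]]; exists a => t Ut; have [b0 ->] := f_ab t Ut.
by split => [/eqP|->]; rewrite ?mul0r // mulf_eq0 invr_eq0 (negbTE b0) orbF => /eqP.
Qed.

Lemma eq_zero_set_on U C D : zero_set_on U D -> (forall t, U t -> C t <-> D t) -> zero_set_on U C.
Proof. by move=> [g D_g] CD; exists g => t Ut; rewrite CD //; apply: D_g. Qed.


Lemma zero_set_on_cst U (P : Prop) : zero_set_on U (fun _ => P).
Proof.
have [p|np] := boolp.pselect P.
  by exists 0 => t _; rewrite mpoly.meval0.
by exists 1 => t _; rewrite mpoly.meval1; split => // /eqP; rewrite oner_eq0.
Qed.

Lemma zero_set_onU U C D : zero_set_on U C -> zero_set_on (fun t => U t /\ ~ C t) D ->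
  zero_set_on U (fun t => C t \/ D t).
Proof.
move=> [g C_g] [h D_h]; exists (g * h) => t Ut; rewrite mpoly.mevalM.
have [Ct|nCt] := boolp.pselect (C t).
  by rewrite ((C_g t Ut).1 Ct) mul0r; split => //; left.
have g0 : ev t g != 0 by apply/eqP => /(C_g t Ut).2.
rewrite (D_h t (conj Ut nCt)); split => [[/nCt[] | ->]|/eqP]; first by rewrite mulr0.
by rewrite mulf_eq0 (negbTE g0) => /eqP; right.
Qed.

Lemma zero_set_on_exists U (I : finType) (C : I -> T -> Prop) :
  (forall i, zero_set_on U (C i)) -> zero_set_on U (fun t => exists i, C i t).
Proof.
move=> /boolp.choice[g C_g]; exists (\prod_i g i) => t Ut.
rewrite (big_morph _ (@mpoly.mevalM _ _ (coord t)) (mpoly.meval1 _)).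
split => [[i /(C_g i t Ut).1 gi0]|/eqP].
  by apply/eqP; rewrite prodf_seq_eq0; apply/hasP; exists i; rewrite ?mem_index_enum //= gi0.
by rewrite prodf_seq_eq0 => /hasP[i _ /= /eqP/(C_g i t Ut).2]; exists i.
Qed.

Definition rational_mx_on U m n (A : T -> 'M[R]_(m, n)) :=
  forall i j, rational_on U (fun t => A t i j).

Lemma eq_rational_mx_on U m n (A B : T -> 'M[R]_(m, n)) :
  rational_mx_on U B -> (forall t, U t -> A t = B t) -> rational_mx_on U A.
Proof. by move=> B_rat AB i j; apply: (eq_rational_on (B_rat i j)) => t Ut; rewrite AB. Qed.

Lemma rational_mx_onS U V m n (A : T -> 'M[R]_(m, n)) :
  (forall t, V t -> U t) -> rational_mx_on U A -> rational_mx_on V A.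
Proof. by move=> VU A_rat i j; apply: rational_onS VU _. Qed.

Lemma rational_mx_on_matrix U m n (F : T -> 'I_m -> 'I_n -> R) :
  (forall i j, rational_on U (fun t => F t i j)) ->
  rational_mx_on U (fun t => \matrix_(i, j) F t i j).
Proof. by move=> F_rat i j; apply: (eq_rational_on (F_rat i j)) => t _; rewrite mxE. Qed.

Lemma rational_mx_on_cst U m n (A : 'M[R]_(m, n)) : rational_mx_on U (fun _ => A).
Proof. by move=> i j; apply: rational_on_cst. Qed.


Lemma rational_mx_onB U m n (A B : T -> 'M[R]_(m, n)) :
  rational_mx_on U A -> rational_mx_on U B -> rational_mx_on U (fun t => A t - B t).
Proof.
move=> A_rat B_rat i j; apply: (eq_rational_on (rational_onB (A_rat i j) (B_rat i j))).
by move=> t _; rewrite !mxE.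
Qed.

Lemma rational_mx_onM U m n l (A : T -> 'M[R]_(m, n)) (B : T -> 'M[R]_(n, l)) :
  rational_mx_on U A -> rational_mx_on U B -> rational_mx_on U (fun t => A t *m B t).
Proof.
move=> A_rat B_rat i j.
have AB_rat k : rational_on U (fun t => A t i k * B t k j) by apply: rational_onM.
apply: (eq_rational_on (rational_on_sum (index_enum _) xpredT AB_rat)).
by move=> t _; rewrite mxE.
Qed.

Lemma rational_mx_on_tr U m n (A : T -> 'M[R]_(m, n)) :
  rational_mx_on U A -> rational_mx_on U (fun t => (A t)^T).
Proof. by move=> A_rat i j; apply: (eq_rational_on (A_rat j i)) => t _; rewrite mxE. Qed.

Lemma rational_mx_onZ U m n (c : T -> R) (A : T -> 'M[R]_(m, n)) :
  rational_on U c -> rational_mx_on U A -> rational_mx_on U (fun t => c t *: A t).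
Proof.
move=> c_rat A_rat i j; apply: (eq_rational_on (rational_onM c_rat (A_rat i j))).
by move=> t _; rewrite mxE.
Qed.

Lemma rational_mx_on_diag U m (d : T -> 'rV[R]_m) :
  rational_mx_on U d -> rational_mx_on U (fun t => diag_mx (d t)).
Proof.
move=> d_rat i j; have [<-|ij] := eqVneq i j.
  by apply: (eq_rational_on (d_rat 0 i)) => t _; rewrite mxE eqxx mulr1n.
by apply: (eq_rational_on (rational_on_cst U 0)) => t _; rewrite mxE (negbTE ij) mulr0n.
Qed.

Lemma rational_on_det U m (A : T -> 'M[R]_m) :
  rational_mx_on U A -> rational_on U (fun t => \det (A t)).
Proof.
move=> A_rat; apply: rational_on_sum => s; apply: rational_onM; first exact: rational_on_cst.
by apply: rational_on_prod => i; apply: A_rat.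
Qed.

Lemma rational_mx_on_adj U m (A : T -> 'M[R]_m) :
  rational_mx_on U A -> rational_mx_on U (fun t => \adj (A t)).
Proof.
move=> A_rat i j; apply: (eq_rational_on (g := fun t => cofactor (A t) j i)); last first.
  by move=> t _; rewrite mxE.
rewrite /cofactor; apply: rational_onM; first exact: rational_on_cst.
apply: (rational_on_det (A := fun t => row' j (col' i (A t)))) => a b.
by apply: (eq_rational_on (A_rat _ _)) => t _; rewrite !mxE.
Qed.

Lemma rational_mx_on_inv U m (A : T -> 'M[R]_m) :
  rational_mx_on U A -> (forall t, U t -> A t \in unitmx) ->
  rational_mx_on U (fun t => invmx (A t)).
Proof.
move=> A_rat A_unit.
apply: (eq_rational_mx_on (B := fun t => (\det (A t))^-1 *: \adj (A t))); last first.
  by move=> t Ut; rewrite /invmx A_unit.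
apply: rational_mx_onZ (rational_mx_on_adj A_rat); apply: rational_onV (rational_on_det A_rat) _.
by move=> t /A_unit; rewrite unitmxE unitfE.
Qed.

Lemma zero_set_on_singular U m (A : T -> 'M[R]_m) :
  rational_mx_on U A -> zero_set_on U (fun t => A t \notin unitmx).
Proof.
move=> A_rat; apply: (eq_zero_set_on (zero_set_on_rational (rational_on_det A_rat))).
by move=> t _; rewrite unitmxE unitfE negbK; split => /eqP.
Qed.

End RationalFunctions.

Section Bandwidths.
Variables (R : realType) (N : nat) (T : Type) (coord : T -> 'I_N -> R).
Implicit Types (U : T -> Prop).

Lemma rational_on_getm U m n (A : T -> 'M[R]_(m, n)) i j :
  rational_mx_on coord U A -> rational_on coord U (fun t => getm (A t) i j).
Proof.
rewrite /getm => A_rat; case: (insub i) => [a|]; last exact: rational_on_cst.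
by case: (insub j) => [b|]; [apply: A_rat | apply: rational_on_cst].
Qed.

Lemma rational_mx_on_Gammac U k m (Z : T -> 'M[R]_(k, m)) i :
  rational_mx_on coord U Z -> rational_mx_on coord U (fun t => Gammac (Z t) i).
Proof.
move=> Z_rat; apply: rational_mx_on_matrix => a b.
apply: rational_onM; first exact: rational_on_cst.
by apply: rational_on_sum => j; apply: rational_onM; apply: rational_on_getm.
Qed.

Lemma Mbw_AM_None k n m (Z : 'M[R]_(k, m)) (om : 'cV[R]_k) (c1 c2 : R) (j : nat) :
  let rho := rhoh Z in
  Mbw n (BW_AM om c1 c2 j) Z = None <->
  m.-1 = 0%N \/ (exists a : 'I_k, \sum_(0 <= t < m.-1) getm Z a t ^+ 2 = 0) \/
  (exists a, 1 - rho a = 0) \/ (j = 1%N /\ exists a, 1 + rho a = 0) \/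
  \sum_a om a 0 * (sig2h Z a ^+ 2 / (1 - rho a) ^+ 4) = 0.
Proof.
move=> rho; rewrite /Mbw -/rho; case: ifP => [|/negbT]; last first.
  rewrite !negb_and !negb_forall negb_imply => defined; split=> // _.
  case/orP: defined => [/negPn/eqP|]; first by left.
  case/orP => [/existsP[a /negPn/eqP]|]; first by right; left; exists a.
  case/orP => [/existsP[a /negPn/eqP]|]; first by do 2 right; left; exists a.
  case/orP => [/andP[/eqP j1 /existsP[a /negPn/eqP]]|/negPn/eqP]; last by do 4 right.
  by do 3 right; left; split=> //; exists a.
move=> /and5P[m1 /forallP ss0 /forallP rho1 /implyP rhoN1 D0]; split=> //.
case=> [m0|[[a /eqP]|[[a /eqP]|[[j1 [a /eqP]]|/eqP]]]].
- by rewrite m0 in m1.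
- by rewrite (negbTE (ss0 a)).
- by rewrite (negbTE (rho1 a)).
- by move: rhoN1; rewrite j1 eqxx => /(_ isT)/forallP/(_ a)/negbTE->.
- by rewrite (negbTE D0).
Qed.

Lemma rational_on_rhoh U k m (Z : T -> 'M[R]_(k, m)) (a : 'I_k) :
  rational_mx_on coord U Z ->
  (forall t, U t -> \sum_(0 <= s < m.-1) getm (Z t) a s ^+ 2 != 0) ->
  rational_on coord U (fun t => rhoh (Z t) a).
Proof.
move=> Z_rat ss0; apply: rational_onM.
  by apply: rational_on_sum => s; apply: rational_onM; apply: rational_on_getm.
by apply: rational_onV ss0; apply: rational_on_sum => s; apply/rational_onX/rational_on_getm.
Qed.

Lemma rational_on_sig2h U k m (Z : T -> 'M[R]_(k, m)) (a : 'I_k) :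
  rational_mx_on coord U Z ->
  (forall t, U t -> \sum_(0 <= s < m.-1) getm (Z t) a s ^+ 2 != 0) ->
  rational_on coord U (fun t => sig2h (Z t) a).
Proof.
move=> Z_rat ss0; apply: rational_onM; first exact: rational_on_cst.
apply: rational_on_sum => s; apply/rational_onX/rational_onB; first exact: rational_on_getm.
by apply: rational_onM; [apply: rational_on_rhoh | apply: rational_on_getm].
Qed.

Lemma zero_set_on_Mbw_AM_None U k n m om c1 c2 j (Z : T -> 'M[R]_(k, m)) :
  rational_mx_on coord U Z ->
  zero_set_on coord U (fun t => Mbw n (BW_AM om c1 c2 j) (Z t) = None).
Proof.
move=> Z_rat.
pose ss t (a : 'I_k) := \sum_(0 <= s < m.-1) getm (Z t) a s ^+ 2.
pose rho t := rhoh (Z t).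
apply: (eq_zero_set_on (D := fun t => m.-1 = 0%N \/ (exists a, ss t a = 0) \/
  (exists a, 1 - rho t a = 0) \/ (j = 1%N /\ exists a, 1 + rho t a = 0) \/
  \sum_a om a 0 * (sig2h (Z t) a ^+ 2 / (1 - rho t a) ^+ 4) = 0)); last first.
  by move=> t _; apply: Mbw_AM_None.
have Z_ratW V : (forall t, V t -> U t) -> rational_mx_on coord V Z.
  by move=> VU; apply: rational_mx_onS VU Z_rat.
have nonzero (P : 'I_k -> Prop) : ~ (exists a, P a) -> forall a, ~ P a.
  by move=> nP a Pa; apply: nP; exists a.
apply: zero_set_onU; first exact: zero_set_on_cst.
apply: zero_set_onU.
  apply: zero_set_on_exists => a; apply: zero_set_on_rational.
  by apply: rational_on_sum => s; apply/rational_onX/rational_on_getm/Z_ratW => t [].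
pose V2 t := (U t /\ ~ m.-1 = 0%N) /\ ~ (exists a, ss t a = 0).
have V2_ss t : V2 t -> forall a, ss t a != 0 by move=> [_ /nonzero ss0] a; apply/eqP/ss0.
have rho_rat V a : (forall t, V t -> V2 t) -> rational_on coord V (fun t => rho t a).
  move=> VV2; apply: rational_on_rhoh => [|t /VV2/V2_ss/(_ a) //].
  by apply: Z_ratW => t /VV2[[]].
apply: zero_set_onU.
  apply: zero_set_on_exists => a; apply: zero_set_on_rational.
  by apply: rational_onB; [exact: rational_on_cst | apply: rho_rat].
apply: zero_set_onU.
  have [->|j1] := eqVneq j 1%N; last first.
    apply: (eq_zero_set_on (zero_set_on_cst _ _ False)) => t _.
    by split => [[/eqP]|//]; rewrite (negbTE j1).
  apply: (eq_zero_set_on (D := fun t => exists a, 1 + rho t a = 0)) => [|t _].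
    apply: zero_set_on_exists => a; apply: zero_set_on_rational.
    by apply: rational_onD; [exact: rational_on_cst | apply: rho_rat => t []].
  by split => [[]|].
apply: zero_set_on_rational; apply: rational_on_sum => a.
apply: rational_onM; first exact: rational_on_cst.
apply: rational_onM.
  apply/rational_onX/rational_on_sig2h => [|t [[/V2_ss/(_ a) //]]].
  by apply: Z_ratW => t [[[[]]]].
apply: rational_onV.
  by apply/rational_onX/rational_onB; [exact: rational_on_cst | apply: rho_rat => t [[V2t _] _]].
by move=> t [[_ /nonzero rho1] _]; apply/expf_neq0/eqP/rho1.
Qed.

Lemma zero_set_on_Mbw_None U k n m (bw : bwspec R k) (Z : T -> 'M[R]_(k, m)) :
  rational_mx_on coord U Z -> zero_set_on coord U (fun t => Mbw n bw (Z t) = None).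
Proof.
move=> Z_rat; case: bw => [om c1 c2 j|om w cb1 cb2 cb3|M].
- exact: zero_set_on_Mbw_AM_None.
- pose sbar t (i : int) := (om^T *m Gammac (Z t) (absz i) *m om) 0 0.
  have sbar_rat i : rational_on coord U (fun t => sbar t i).
    apply: rational_mx_onM; last exact: rational_mx_on_cst.
    by apply: rational_mx_onM; [exact: rational_mx_on_cst | exact: rational_mx_on_Gammac].
  pose den t := symsum m (fun i => w i * sbar t i).
  apply: (eq_zero_set_on (zero_set_on_rational (f := den) _)).
    apply: rational_on_sum => i; apply: rational_onD.
      by apply: rational_onM; [exact: rational_on_cst | exact: sbar_rat].
    case: (0 < i)%N; last exact: rational_on_cst.
    by apply: rational_onM; [exact: rational_on_cst | exact: sbar_rat].
  by move=> t _; rewrite /Mbw; case: eqP.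
- by apply: (eq_zero_set_on (zero_set_on_cst _ _ False)) => t _.
Qed.

End Bandwidths.

Section Coordinates.
Variables (R : realType) (n k q : nat).
Local Notation N := (n + n * k + q * k)%N.
Local Notation T := ('cV[R]_n * 'M[R]_(n, k) * 'M[R]_(q, k))%type.

Definition coords (t : T) : 'I_N -> R := packv t.1.1 t.1.2 t.2.

Lemma rational_on_coord U (c : 'I_N) : rational_on coords U (fun t => coords t c).
Proof.
apply: (eq_rational_on (rational_on_poly coords U (mpoly.mpolyX R (mpoly.mnm1 c)))).
by move=> t _; rewrite mpoly.mevalXU.
Qed.

Lemma block_index_lt m (a : 'I_m) (b : 'I_k) : (a * k + b < m * k)%N.
Proof.
by apply: (@leq_trans (a * k + k)); rewrite ?ltn_add2l // -mulSnr leq_mul2r ltn_ord orbT.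
Qed.

Lemma block_indexK (a b : nat) : (b < k)%N -> ((a * k + b) %/ k = a /\ (a * k + b) %% k = b)%N.
Proof.
move=> bk; have k_gt0 : (0 < k)%N by apply: leq_ltn_trans bk.
by rewrite divnMDl // modnMDl divn_small // addn0 modn_small.
Qed.

Lemma rational_mx_on_y U : rational_mx_on coords U (fun t : T => t.1.1).
Proof.
move=> i j; have iN : (i < N)%N by rewrite -addnA ltn_addr.
apply: (eq_rational_on (rational_on_coord U (Ordinal iN))) => t _.
by rewrite /coords /packv /= ltn_ord (ord1 j) -[0%N]/(nat_of_ord (0 : 'I_1)) getm_ord.
Qed.

Lemma rational_mx_on_X U : rational_mx_on coords U (fun t : T => t.1.2).
Proof.
move=> a b; have cN : (n + (a * k + b) < N)%N by rewrite -addnA ltn_add2l ltn_addr ?block_index_lt.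
apply: (eq_rational_on (rational_on_coord U (Ordinal cN))) => t _.
rewrite /coords /packv /= ltnNge leq_addr /= ltn_add2l block_index_lt addKn.
by have [-> ->] := block_indexK a (ltn_ord b); rewrite getm_ord.
Qed.

Lemma rational_mx_on_Rm U : rational_mx_on coords U (fun t : T => t.2).
Proof.
move=> a b; have cN : (n + n * k + (a * k + b) < N)%N by rewrite ltn_add2l block_index_lt.
apply: (eq_rational_on (rational_on_coord U (Ordinal cN))) => t _.
have out_y : (n + n * k + (a * k + b) < n)%N = false by rewrite ltnNge -addnA leq_addr.
have out_X : (n + n * k + (a * k + b) < n + n * k)%N = false by rewrite ltnNge leq_addr.
rewrite /coords /packv /= out_y out_X -addnA !addKn.
by have [-> ->] := block_indexK a (ltn_ord b); rewrite getm_ord.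
Qed.

End Coordinates.

Arguments coords {R n k q}.

(* invmx returns its argument on singular matrices, so this agrees with Ahat
   only where V_1 V_1' is invertible. *)
Definition Ahat_total (R : realType) n k p (X : 'M[R]_(n, k)) (y : 'cV[R]_n) : 'M[R]_(k, p * k) :=
  Vp p X y *m (V1 p X y)^T *m invmx (V1 p X y *m (V1 p X y)^T).

Section NstarCharacterization.
Variables (R : realType) (kappa : R -> R) (k n q p : nat) (bw : bwspec R k).
Variables (X : 'M[R]_(n, k)) (Rm : 'M[R]_(q, k)).
Hypotheses (kappaA : kernelA kappa) (bw_admissible : bw_ok (n - p) bw) (np_gt0 : (0 < n - p)%N).

Lemma inNstar_iff y :
  inNstar kappa bw p X Rm y <->
  V1 p X y *m (V1 p X y)^T \notin unitmx \/
  1%:M - sumA (Ahat_total p X y) \notin unitmx \/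
  Mbw n bw (Vp p X y - Ahat_total p X y *m V1 p X y) = None \/
  Bmx X Rm y (Ahat_total p X y) *m (Bmx X Rm y (Ahat_total p X y))^T \notin unitmx.
Proof.
rewrite /inNstar; case E: (Omegah kappa bw p X Rm y) => [Om|]; last first.
  split=> [_|]; last by left.
  move: E; rewrite /Omegah /Ahat; case: ifP => [_|/negbT]; last by left.
  case: ifP => [_|/negbT]; last by right; left.
  by case: Mbw => // _; do 2 right; left.
have [A [EA DU _] [c [K [c_gt0 K_posdef EOm]]]] := Omegah_congruence kappaA bw_admissible np_gt0 E.
have M_defined : Mbw n bw (Vp p X y - A *m V1 p X y) <> None.
  by move=> M_undef; move: E; rewrite /Omegah EA DU M_undef.
have S_unit : V1 p X y *m (V1 p X y)^T \in unitmx by move: EA; rewrite /Ahat; case: ifP.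
have -> : Ahat_total p X y = A by move: EA; rewrite /Ahat S_unit => -[].
rewrite S_unit DU unitmx_mulmx_trmx -(unitmx_congr _ c_gt0 K_posdef) -EOm.
split=> [[//|[Om0 [[<-] Om_sing]]]|[//|[//|[/M_defined[]|Om_sing]]]]; first by do 3 right.
by right; exists Om.
Qed.

End NstarCharacterization.

Section NstarAlgebraic.
Variables (R : realType) (n k q p : nat).
Local Notation T := ('cV[R]_n * 'M[R]_(n, k) * 'M[R]_(q, k))%type.
Implicit Types U : T -> Prop.

Let XtX_unit U := forall t : T, U t -> t.1.2^T *m t.1.2 \in unitmx.
Let S_unit U := forall t : T, U t -> V1 p t.1.2 t.1.1 *m (V1 p t.1.2 t.1.1)^T \in unitmx.
Let D_unit U := forall t : T, U t -> 1%:M - sumA (Ahat_total p t.1.2 t.1.1) \in unitmx.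

Lemma rational_mx_on_Vhat U : XtX_unit U -> rational_mx_on coords U (fun t => Vhat t.1.2 t.1.1).
Proof.
move=> XtX; rewrite /Vhat /uhat.
have [y_rat X_rat] := (rational_mx_on_y U, rational_mx_on_X U).
apply: rational_mx_onM; first exact: rational_mx_on_tr.
apply/rational_mx_on_diag/rational_mx_on_tr/rational_mx_onB => //.
have XtX_rat : rational_mx_on coords U (fun t => t.1.2^T *m t.1.2).
  exact/rational_mx_onM/X_rat/rational_mx_on_tr.
apply: rational_mx_onM => //; apply: rational_mx_onM => //.
by apply: rational_mx_onM; [exact: rational_mx_on_inv | exact: rational_mx_on_tr].
Qed.

Lemma rational_mx_on_Vp U : XtX_unit U -> rational_mx_on coords U (fun t => Vp p t.1.2 t.1.1).
Proof.
by move=> XtX; apply: rational_mx_on_matrix => a j; apply/rational_on_getm/rational_mx_on_Vhat.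
Qed.

Lemma rational_mx_on_V1 U : XtX_unit U -> rational_mx_on coords U (fun t => V1 p t.1.2 t.1.1).
Proof.
by move=> XtX; apply: rational_mx_on_matrix => a j; apply/rational_on_getm/rational_mx_on_Vhat.
Qed.

Lemma rational_mx_on_Ahat_total U : XtX_unit U -> S_unit U ->
  rational_mx_on coords U (fun t => Ahat_total p t.1.2 t.1.1).
Proof.
move=> XtX S; have [Vp_rat V1_rat] := (rational_mx_on_Vp XtX, rational_mx_on_V1 XtX).
apply: rational_mx_onM; first by apply/rational_mx_onM/rational_mx_on_tr.
by apply: rational_mx_on_inv => //; apply/rational_mx_onM/rational_mx_on_tr.
Qed.

Lemma rational_mx_on_D U : XtX_unit U -> S_unit U ->
  rational_mx_on coords U (fun t => 1%:M - sumA (Ahat_total p t.1.2 t.1.1)).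
Proof.
move=> XtX S; apply: rational_mx_onB; first exact: rational_mx_on_cst.
move=> a b; apply: (eq_rational_on (rational_on_sum (index_enum _) xpredT (fun l : 'I_p =>
  rational_on_getm a (l * k + b) (rational_mx_on_Ahat_total XtX S)))).
by move=> t _; rewrite summxE; apply: eq_bigr => l _; rewrite mxE.
Qed.

Lemma rational_mx_on_Bmx U : XtX_unit U -> S_unit U -> D_unit U ->
  rational_mx_on coords U (fun t => Bmx t.1.2 t.2 t.1.1 (Ahat_total p t.1.2 t.1.1)).
Proof.
move=> XtX S D; have A_rat := rational_mx_on_Ahat_total XtX S.
have X_rat := rational_mx_on_X U.
apply: rational_mx_onM; last first.
  by apply/rational_mx_onB/rational_mx_onM/rational_mx_on_V1 => //; apply: rational_mx_on_Vp.
apply: rational_mx_onM; last by apply: rational_mx_on_inv => //; apply: rational_mx_on_D.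
apply: rational_mx_onM; first exact: rational_mx_on_Rm.
by apply: rational_mx_on_inv => //; apply/rational_mx_onM/X_rat/rational_mx_on_tr.
Qed.

Lemma zero_set_on_inNstar_conditions (bw : bwspec R k) :
  zero_set_on coords (fun t : T => t.1.2^T *m t.1.2 \in unitmx) (fun t =>
    V1 p t.1.2 t.1.1 *m (V1 p t.1.2 t.1.1)^T \notin unitmx \/
    1%:M - sumA (Ahat_total p t.1.2 t.1.1) \notin unitmx \/
    Mbw n bw (Vp p t.1.2 t.1.1 - Ahat_total p t.1.2 t.1.1 *m V1 p t.1.2 t.1.1) = None \/
    Bmx t.1.2 t.2 t.1.1 (Ahat_total p t.1.2 t.1.1) *m
      (Bmx t.1.2 t.2 t.1.1 (Ahat_total p t.1.2 t.1.1))^T \notin unitmx).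
Proof.
have unit_of (b : bool) : ~ ~~ b -> b by case: b.
apply: zero_set_onU.
  apply: zero_set_on_singular; apply: rational_mx_onM; last apply: rational_mx_on_tr;
  by apply: rational_mx_on_V1 => t.
apply: zero_set_onU.
  by apply/zero_set_on_singular/rational_mx_on_D => t [] // _ /unit_of.
apply: zero_set_onU.
  apply: zero_set_on_Mbw_None; apply: rational_mx_onB.
    by apply: rational_mx_on_Vp => t [[]].
  apply: rational_mx_onM; last by apply: rational_mx_on_V1 => t [[]].
  by apply: rational_mx_on_Ahat_total => t [[]] // _ /unit_of.
apply: zero_set_on_singular; apply: rational_mx_onM; last apply: rational_mx_on_tr;
  by apply: rational_mx_on_Bmx => t [[[]]] // _ /unit_of // _ /unit_of.
Qed.

End NstarAlgebraic.

Lemma inNstar_zero_set (R : realType) (kappa : R -> R) n k q p (bw : bwspec R k) :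
  kernelA kappa -> bw_ok (n - p) bw -> (0 < n - p)%N ->
  exists g : mpoly.mpoly (n + n * k + q * k) R,
    forall (X : 'M[R]_(n, k)) (Rm : 'M[R]_(q, k)), \rank X = k ->
    forall y, inNstar kappa bw p X Rm y <-> mpoly.meval (packv y X Rm) g = 0.
Proof.
move=> kappaA bw_admissible np_gt0.
have [g g_N] := zero_set_on_inNstar_conditions n q p bw.
exists g => X Rm rX y; apply: iff_trans (inNstar_iff X Rm kappaA bw_admissible np_gt0 y) _.
exact: (g_N (y, X, Rm) (unitmx_trmx_mul_self rX)).
Qed.

Theorem lemma3p2 (R : realType) (n k q p : nat) (kappa : R -> R)
  (bw : bwspec R k) (X : 'M[R]_(n, k)) (Rm : 'M[R]_(q, k)) (r : 'cV[R]_q) :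
  (2 < n)%N -> (1 <= k)%N -> (k < n)%N -> \rank X = k ->
  (1 <= q)%N -> \rank Rm = q ->
  kernelA kappa -> bw_ok (n - p) bw -> (1 <= p)%N -> (p * (k + 1) <= n)%N ->
  (* 1 *)
  (forall y : 'cV[R]_n,
     (exists O, Omegah kappa bw p X Rm y = Some O /\ nnd O) <->
     Omegah kappa bw p X Rm y <> None) /\
  (* 2 *)
  (forall y : 'cV[R]_n,
     (exists O, Omegah kappa bw p X Rm y = Some O /\ O \notin unitmx) <->
     (Omegah kappa bw p X Rm y <> None /\
      exists B, Bp p X Rm y = Some B /\ (\rank B < q)%N)) /\
  (* 3 *)
  (forall y : 'cV[R]_n,
     Omegah kappa bw p X Rm y = Some 0 <->
     (Omegah kappa bw p X Rm y <> None /\ Bp p X Rm y = Some 0)) /\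
  (* 4 *)
  (forall y : 'cV[R]_n,
     Omegah kappa bw p X Rm y <> None ->
     (exists Z, Zhat p X y = Some Z /\ \rank Z = k) ->
     exists O, Omegah kappa bw p X Rm y = Some O /\ posdef O) /\
  (* 5 *)
  (exists g : mpoly.mpoly (n + n * k + q * k) R,
     forall (X' : 'M[R]_(n, k)) (Rm' : 'M[R]_(q, k)),
       \rank X' = k -> \rank Rm' = q ->
       forall y : 'cV[R]_n,
         inNstar kappa bw p X' Rm' y <-> mpoly.meval (packv y X' Rm') g = 0).
Proof.
move=> _ k_gt0 _ rX _ rRm kappaA bw_admissible p_gt0 pk_le_n.
have np_gt0 : (0 < n - p)%N.
  by rewrite subn_gt0 (leq_trans _ pk_le_n) // -{1}[p]muln1 ltn_pmul2l // addn1 ltnS.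
split; first exact: Omegah_nnd.
split; first exact: Omegah_singular.
split; first exact: Omegah_eq0.
split; first by move=> y; apply: Omegah_posdef.
have [g g_N] := inNstar_zero_set q kappaA bw_admissible np_gt0.
by exists g => X' Rm' rX' _; apply: g_N.
Qed.
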